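(* In the standing setting, let $(A,B,R,\sigma)$ be a normalized context and $(g,f)\in\mathcal{FC}$. If $g^{\uparrow}\ne f_\bot$, then there is no concept $\langle g_0,f_0\rangle\in\mathcal M$ with $\langle g,g^{\uparrow}\rangle\prec\langle g_0,f_0\rangle\prec\langle g_\top,f_\bot\rangle$. Dually, if $f^{\downarrow}\ne g_\bot$, then there is no concept $\langle g_0,f_0\rangle\in\mathcal M$ with $\langle g_\bot,f_\top\rangle\prec\langle g_0,f_0\rangle\prec\langle f^{\downarrow},f\rangle$. (Here $\prec$ denotes the strict order of $\mathcal M$.)
   Context: Adjoint triple: for posets $(P_1,\le_1),(P_2,\le_2),(P_3,\le_3)$, maps $\&\colon P_1\times P_2\to P_3$, $\swarrow\colon P_3\times P_2\to P_1$, $\nwarrow\colon P_3\times P_1\to P_2$ with $x\le_1 z\swarrow y \iff x\,\&\,y\le_3 z \iff y\le_2 z\nwarrow x$ for all $x,y,z$. For lower-bounded posets, $\&$ has zero-divisors if there are $x\ne\bot_1$, $y\neq\bot_2$ with $x\,\&\,y=\bot_3$. Standing setting: $(L_1,\preceq_1,\bot_1,\top_1)$ and $(L_2,\preceq_2,\bot_2,\top_2)$ are complete lattices and $(P,\le,\bot,\top)$ is a bounded poset. A multi-adjoint frame consists of adjoint triples $(\&_i,\swarrow^i,\nwarrow_i)$, $i=1,\dots,n$, with respect to $L_1,L_2,P$; a property-oriented frame consists of adjoint triples $(\&^p_j,\swarrow_p^j,\nwarrow^p_j)$, $j=1,\dots,m$, with respect to $P,L_2,L_1$; an object-oriented frame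 consists of adjoint triples $(\&^o_k,\swarrow_o^k,\nwarrow^o_k)$, $k=1,\dots,s$, with respect to $L_1,P,L_2$. All conjunctors $\&_i,\&^p_j,\&^o_k$ have no zero-divisors. A context $(A,B,R,\sigma)$ consists of non-empty sets $A,B$, $R\colon A\times B\to P$, and maps $\sigma,\sigma_p,\sigma_o$ from $A\times B$ to the index sets of the three frames. It is normalized if every $a\in A$ has $b_1,b_2\in B$ with $R(a,b_1)\ne\bot$, $R(a,b_2)=\bot$, and every $b\in B$ has $a_1,a_2\in A$ with $R(a_1,b)\neq\bot$, $R(a_2,b)=\bot$. Concept-forming operators: $g^{\uparrow}(a)=\inf\{R(a,b)\swarrow^{\sigma(a,b)}g(b)\mid b\in B\}$ for $g\in L_2^B$ and $f^{\downarrow}(b)=\inf\{R(a,b)\nwarrow_{\sigma(a,b)}f(a)\mid a\in A\}$ for $f\in L_1^A$. Multi-adjoint concept lattice $\mathcal M=\{\langle g,f\rangle\mid g\in L_2^B,f\in L_1^A,\ g^{\uparrow}=f,\ f^{\downarrow}=g\}$, ordered by $\langle g_1,f_1\rangle\preceq\langle g_2,f_2\rangle$ iff $g_1\preceq_2 g_2$ pointwise. Fuzzy necessity operators: $g^{\uparrow_N}(a)=\inf\{g(b)\swarrow_o^{\sigma_o(a,b)}R(a,b)\mid b\in B\}$ and $f^{\downarrow^N}(b)=\inf\{f(a)\nwarrow^p_{\sigma_p(a,b)}R(a,b)\mid a\in A\}$. $\mathcal F_N=\{(g,f)\mid g\in L_2^B,\ f\in L_1^A,\ g^{\uparrow_N}=f,\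 f^{\downarrow^N}=g\}$. For $X\subseteq B$, $\chi_X\in L_2^B$ takes value $\top_2$ on $X$ and $\bot_2$ elsewhere; for $Y\subseteq A$, $\chi_Y\in L_1^A$ takes value $\top_1$ on $Y$ and $\bot_1$ elsewhere. $\mathcal{FC}=\{(\chi_X,\chi_Y)\in\mathcal F_N\mid \varnothing\ne X\subsetneq B,\ \varnothing\neq Y\subsetneq A\}$. $g_\top,g_\bot\in L_2^B$ are the constant maps with values $\top_2,\bot_2$; $f_\top,f_\bot\in L_1^A$ are the constant maps with values $\top_1,\bot_1$. *)

From mathcomp Require Import ssreflect ssrfun ssrbool eqtype ssrnat fintype.

Set Implicit Arguments.
Unset Strict Implicit.
Unset Printing Implicit Defensive.

Record poset := Poset {
  pcar :> Type;
  ple : pcar -> pcar -> Prop;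
  ple_refl : forall x, ple x x;
  ple_trans : forall x y z, ple x y -> ple y z -> ple x z;
  ple_anti : forall x y, ple x y -> ple y x -> x = y
}.

Record bposet := BPoset {
  bp_poset :> poset;
  pbot : bp_poset;
  ptop : bp_poset;
  pbot_le : forall x, ple pbot x;
  ple_top : forall x, ple x ptop
}.

Record clattice := CLattice {
  cl_poset :> poset;
  inf : (cl_poset -> Prop) -> cl_poset;
  inf_lb : forall (S : cl_poset -> Prop) x, S x -> ple (inf S) x;
  inf_glb : forall (S : cl_poset -> Prop) y,
      (forall x, S x -> ple y x) -> ple y (inf S)
}.

Definition cbot (L : clattice) : L := inf (fun _ : L => True).
Definition ctop (L : clattice) : L := inf (fun _ : L => False).

Definition adjoint_triple (P1 P2 P3 : poset)
  (conj : P1 -> P2 -> P3) (sw : P3 -> P2 -> P1) (nw : P3 -> P1 -> P2) : Prop :=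
  forall (x : P1) (y : P2) (z : P3),
    (ple x (sw z y) <-> ple (conj x y) z) /\
    (ple (conj x y) z <-> ple y (nw z x)).

Definition has_zero_divisors (P1 P2 P3 : poset) (b1 : P1) (b2 : P2) (b3 : P3)
  (conj : P1 -> P2 -> P3) : Prop :=
  exists x y, x <> b1 /\ y <> b2 /\ conj x y = b3.

Record ma_frame (L1 L2 : clattice) (P : bposet) := MAFrame {
  ma_n : nat;
  ma_and : 'I_ma_n -> L1 -> L2 -> P;
  ma_sw : 'I_ma_n -> P -> L2 -> L1;
  ma_nw : 'I_ma_n -> P -> L1 -> L2;
  ma_adj : forall i, adjoint_triple (ma_and i) (ma_sw i) (ma_nw i);
  ma_nzd : forall i, ~ has_zero_divisors (cbot L1) (cbot L2) (pbot P) (ma_and i)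
}.

Record po_frame (L1 L2 : clattice) (P : bposet) := POFrame {
  po_m : nat;
  po_and : 'I_po_m -> P -> L2 -> L1;
  po_sw : 'I_po_m -> L1 -> L2 -> P;
  po_nw : 'I_po_m -> L1 -> P -> L2;
  po_adj : forall j, adjoint_triple (po_and j) (po_sw j) (po_nw j);
  po_nzd : forall j, ~ has_zero_divisors (pbot P) (cbot L2) (cbot L1) (po_and j)
}.

Record oo_frame (L1 L2 : clattice) (P : bposet) := OOFrame {
  oo_s : nat;
  oo_and : 'I_oo_s -> L1 -> P -> L2;
  oo_sw : 'I_oo_s -> L2 -> P -> L1;
  oo_nw : 'I_oo_s -> L2 -> L1 -> P;
  oo_adj : forall k, adjoint_triple (oo_and k) (oo_sw k) (oo_nw k);
  oo_nzd : forall k, ~ has_zero_divisors (cbot L1) (pbot P) (cbot L2) (oo_and k)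
}.

Record context (L1 L2 : clattice) (P : bposet)
  (F : ma_frame L1 L2 P) (Fp : po_frame L1 L2 P) (Fo : oo_frame L1 L2 P) := Context {
  cA : Type;
  cB : Type;
  cA_ne : inhabited cA;
  cB_ne : inhabited cB;
  cR : cA -> cB -> P;
  csigma : cA -> cB -> 'I_(ma_n F);
  csigma_p : cA -> cB -> 'I_(po_m Fp);
  csigma_o : cA -> cB -> 'I_(oo_s Fo)
}.

Section Ops.
Variables (L1 L2 : clattice) (P : bposet).
Variables (F : ma_frame L1 L2 P) (Fp : po_frame L1 L2 P) (Fo : oo_frame L1 L2 P).
Variable K : context F Fp Fo.

Definition normalized : Prop :=
  (forall a : cA K, (exists b1, cR a b1 <> pbot P) /\ (exists b2, cR a b2 = pbot P)) /\
  (forall b : cB K, (exists a1, cR a1 b <> pbot P) /\ (exists a2, cR a2 b = pbot P)).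

Definition up (g : cB K -> L2) : cA K -> L1 := fun a =>
  inf (fun x : L1 => exists b, x = ma_sw (csigma a b) (cR a b) (g b)).
Definition down (f : cA K -> L1) : cB K -> L2 := fun b =>
  inf (fun y : L2 => exists a, y = ma_nw (csigma a b) (cR a b) (f a)).

Definition upN (g : cB K -> L2) : cA K -> L1 := fun a =>
  inf (fun x : L1 => exists b, x = oo_sw (csigma_o a b) (g b) (cR a b)).
Definition downN (f : cA K -> L1) : cB K -> L2 := fun b =>
  inf (fun y : L2 => exists a, y = po_nw (csigma_p a b) (f a) (cR a b)).

Definition in_M (g : cB K -> L2) (f : cA K -> L1) : Prop :=
  up g = f /\ down f = g.

Definition concept_le (c1 c2 : (cB K -> L2) * (cA K -> L1)) : Prop :=
  forall b, ple (c1.1 b) (c2.1 b).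
Definition concept_lt (c1 c2 : (cB K -> L2) * (cA K -> L1)) : Prop :=
  concept_le c1 c2 /\ c1 <> c2.

Definition in_FN (g : cB K -> L2) (f : cA K -> L1) : Prop :=
  upN g = f /\ downN f = g.

Definition chiB (X : pred (cB K)) : cB K -> L2 :=
  fun b => if X b then ctop L2 else cbot L2.
Definition chiA (Y : pred (cA K)) : cA K -> L1 :=
  fun a => if Y a then ctop L1 else cbot L1.

Definition in_FC (g : cB K -> L2) (f : cA K -> L1) : Prop :=
  exists (X : pred (cB K)) (Y : pred (cA K)),
    g = chiB X /\ f = chiA Y /\ in_FN g f /\
    (exists b, X b) /\ (exists b, ~~ X b) /\
    (exists a, Y a) /\ (exists a, ~~ Y a).

Definition g_top : cB K -> L2 := fun _ => ctop L2.
Definition g_bot : cB K -> L2 := fun _ => cbot L2.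
Definition f_top : cA K -> L1 := fun _ => ctop L1.
Definition f_bot : cA K -> L1 := fun _ => cbot L1.

End Ops.

Arguments g_top {L1 L2 P F Fp Fo} K _.
Arguments g_bot {L1 L2 P F Fp Fo} K _.
Arguments f_top {L1 L2 P F Fp Fo} K _.
Arguments f_bot {L1 L2 P F Fp Fo} K _.
Arguments normalized {L1 L2 P F Fp Fo} K.

(* A concept <g0, f0> of M with g <= g0 either has f0 = f_bot, and then
   g0 = f_bot^down = g_top, or has f0(a) <> bot for some object a.  Since
   (chi_X, chi_Y) is a fixed pair of the necessity operators and the conjunctors have
   no zero divisors, R(a, b) = bot whenever exactly one of a in Y, b in X holds.
   If a is in Y, then g0(b) = f0^down(b) <= R(a, b) nwarrow f0(a) = bot for
   b outside X, so g0 = g; if a is not in Y, the same bound at some b in X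
   contradicts top = g(b) <= g0(b).  So nothing lies strictly between
   <g, g^up> and <g_top, f_bot>; the second claim is the dual argument with
   objects and attributes exchanged. *)
From Stdlib Require Import Classical FunctionalExtensionality.
From mathcomp Require Import ssreflect ssrfun ssrbool eqtype ssrnat fintype.

Set Implicit Arguments.
Unset Strict Implicit.
Unset Printing Implicit Defensive.

Lemma exists_ne_of_ne_const (T U : Type) (h : T -> U) (c : U) :
  h <> (fun _ => c) -> exists t, h t <> c.
Proof.
move=> h_nc; apply: NNPP => no_t; apply: h_nc.
exact: functional_extensionality (not_ex_not_all _ _ no_t).
Qed.

Lemma ple_least_eq (T : poset) (b x : T) :
  (forall y, ple b y) -> ple x b -> x = b.
Proof. by move=> b_least le_xb; apply: ple_anti. Qed.

Lemma cbot_le (L : clattice) (x : L) : ple (cbot L) x.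
Proof. exact: inf_lb. Qed.

Lemma le_ctop (L : clattice) (x : L) : ple x (ctop L).
Proof. by apply: inf_glb. Qed.

Lemma le_cbot_eq (L : clattice) (x : L) : ple x (cbot L) -> x = cbot L.
Proof. exact/ple_least_eq/cbot_le. Qed.

Lemma ctop_le_eq (L : clattice) (x : L) : ple (ctop L) x -> x = ctop L.
Proof. by move=> le_top_x; apply: ple_anti => //; apply: le_ctop. Qed.

Lemma clattice_trivial (L : clattice) (x y : L) : ctop L = cbot L -> x = y.
Proof.
move=> top_bot; have all_bot (z : L) : z = cbot L.
  by apply: le_cbot_eq; rewrite -top_bot; apply: le_ctop.
by rewrite (all_bot x) (all_bot y).
Qed.

Section AdjointTriple.

Variables (P1 P2 P3 : poset) (conj : P1 -> P2 -> P3).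
Variables (sw : P3 -> P2 -> P1) (nw : P3 -> P1 -> P2).
Hypothesis adj : adjoint_triple conj sw nw.
Variables (b1 : P1) (b2 : P2) (b3 : P3).
Hypothesis b1_least : forall x, ple b1 x.
Hypothesis b2_least : forall y, ple b2 y.
Hypothesis b3_least : forall z, ple b3 z.
Hypothesis no_zero_divisors : ~ has_zero_divisors b1 b2 b3 conj.

Lemma le_sw_nw x y z : ple x (sw z y) <-> ple y (nw z x).
Proof. exact: iff_trans (proj1 (adj x y z)) (proj2 (adj x y z)). Qed.

Lemma le_sw_bot_r x z : ple x (sw z b2).
Proof. exact/le_sw_nw/b2_least. Qed.

Lemma le_nw_bot_r y z : ple y (nw z b1).
Proof. exact/le_sw_nw/b1_least. Qed.

Lemma conj_eq_least x y : conj x y = b3 -> x = b1 \/ y = b2.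
Proof.
move=> xy_b3; case: (classic (x = b1)) => [|x_nb1]; first by left.
case: (classic (y = b2)) => [|y_nb2]; first by right.
by case: no_zero_divisors; exists x, y.
Qed.

Lemma le_sw_least x y : ple x (sw b3 y) -> x = b1 \/ y = b2.
Proof. by move/(proj1 (adj _ _ _))/(ple_least_eq b3_least)/conj_eq_least. Qed.

Lemma le_nw_least x y : ple y (nw b3 x) -> x = b1 \/ y = b2.
Proof. by move/le_sw_nw/le_sw_least. Qed.

Lemma sw_least_eq y : y <> b2 -> sw b3 y = b1.
Proof. by move=> y_nb2; case: (le_sw_least (ple_refl (sw b3 y))). Qed.

Lemma nw_least_eq x : x <> b1 -> nw b3 x = b2.
Proof. by move=> x_nb1; case: (le_nw_least (ple_refl (nw b3 x))). Qed.

End AdjointTriple.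

Section Context.

Variables (L1 L2 : clattice) (P : bposet).
Variables (F : ma_frame L1 L2 P) (Fp : po_frame L1 L2 P) (Fo : oo_frame L1 L2 P).
Variable K : context F Fp Fo.

Lemma up_le_sw (h : cB K -> L2) a b :
  ple (up h a) (ma_sw (csigma a b) (cR a b) (h b)).
Proof. by apply: inf_lb; exists b. Qed.

Lemma down_le_nw (h : cA K -> L1) a b :
  ple (down h b) (ma_nw (csigma a b) (cR a b) (h a)).
Proof. by apply: inf_lb; exists a. Qed.

Lemma up_eq_cbot (h : cB K -> L2) a b :
  cR a b = pbot P -> h b <> cbot L2 -> up h a = cbot L1.
Proof.
move=> Rab_bot hb_nbot; apply: le_cbot_eq.
have sw_bot := sw_least_eq (ma_adj _) (@pbot_le P) (ma_nzd (i := csigma a b)) hb_nbot.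
rewrite -sw_bot -Rab_bot.
exact: up_le_sw.
Qed.

Lemma down_eq_cbot (h : cA K -> L1) a b :
  cR a b = pbot P -> h a <> cbot L1 -> down h b = cbot L2.
Proof.
move=> Rab_bot ha_nbot; apply: le_cbot_eq.
have nw_bot := nw_least_eq (ma_adj _) (@pbot_le P) (ma_nzd (i := csigma a b)) ha_nbot.
rewrite -nw_bot -Rab_bot.
exact: down_le_nw.
Qed.

Lemma up_g_bot : up (g_bot K) = f_top K.
Proof.
apply: functional_extensionality => a; apply: ctop_le_eq.
apply: inf_glb => _ [b ->]; rewrite /g_bot.
apply: (le_sw_bot_r (ma_adj (csigma a b)) (@cbot_le L2)).
Qed.

Lemma down_f_bot : down (f_bot K) = g_top K.
Proof.
apply: functional_extensionality => b; apply: ctop_le_eq.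
apply: inf_glb => _ [a ->]; rewrite /f_bot.
apply: (le_nw_bot_r (ma_adj (csigma a b)) (@cbot_le L1)).
Qed.

Lemma le_up_of_le_down (g : cB K -> L2) (f : cA K -> L1) :
  (forall b, ple (g b) (down f b)) -> forall a, ple (f a) (up g a).
Proof.
move=> le_g_down a; apply: inf_glb => _ [b ->].
apply/(le_sw_nw (ma_adj _))/(ple_trans (le_g_down b)); exact: down_le_nw.
Qed.

Lemma cR_pbot_of_upN (g : cB K -> L2) a b :
  upN g a <> cbot L1 -> g b = cbot L2 -> cR a b = pbot P.
Proof.
move=> upNga_nbot gb_bot.
have le_upN : ple (upN g a) (oo_sw (csigma_o a b) (cbot L2) (cR a b)).
  by rewrite -gb_bot; apply: inf_lb; exists b.
by case: (le_sw_least (oo_adj _) (@cbot_le L2) (oo_nzd (k := _)) le_upN).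
Qed.

Lemma cR_pbot_of_downN (f : cA K -> L1) a b :
  downN f b <> cbot L2 -> f a = cbot L1 -> cR a b = pbot P.
Proof.
move=> downNfb_nbot fa_bot.
have le_downN : ple (downN f b) (po_nw (csigma_p a b) (cbot L1) (cR a b)).
  by rewrite -fa_bot; apply: inf_lb; exists a.
by case: (le_nw_least (po_adj _) (@cbot_le L1) (po_nzd (j := _)) le_downN).
Qed.

Lemma in_FC_concept_above g f g0 f0 :
  in_FC g f -> in_M g0 f0 -> (forall b, ple (g b) (g0 b)) ->
  g0 = g \/ f0 = f_bot K.
Proof.
move=> [X [Y [-> [-> [[upNg downNf] [[bX XbX] _]]]]]] [up_g0 down_f0] le_g_g0.
case: (classic (f0 = f_bot K)) => [|/(exists_ne_of_ne_const (c := cbot L1)) [a f0a_nbot]].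
  by right.
left; case Ya: (Y a); last first.
  case: (classic (ctop L2 = cbot L2)) => [top_bot | top_nbot].
    by apply: functional_extensionality => b; apply: clattice_trivial.
  have le_top_g0 : ple (ctop L2) (g0 bX) by have := le_g_g0 bX; rewrite /chiB XbX.
  have RabX_bot : cR a bX = pbot P.
    apply: (cR_pbot_of_downN (f := chiA Y)); first by rewrite downNf /chiB XbX.
    by rewrite /chiA Ya.
  case: top_nbot; apply: le_cbot_eq.
  by rewrite -(down_eq_cbot RabX_bot f0a_nbot) down_f0.
have top_nbot : ctop L1 <> cbot L1.
  by move=> top_bot; apply: f0a_nbot; apply: clattice_trivial.
apply: functional_extensionality => b; rewrite /chiB; case Xb: (X b).
  by apply: ctop_le_eq; have := le_g_g0 b; rewrite /chiB Xb.
rewrite -down_f0 (down_eq_cbot (a := a)) //.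
apply: (cR_pbot_of_upN (g := chiB X)); first by rewrite upNg /chiA Ya.
by rewrite /chiB Xb.
Qed.

Lemma in_FC_concept_below g f g0 f0 :
  in_FC g f -> in_M g0 f0 -> (forall a, ple (f a) (f0 a)) ->
  f0 = f \/ g0 = g_bot K.
Proof.
move=> [X [Y [-> [-> [[upNg downNf] [_ [_ [[aY YaY] _]]]]]]]] [up_g0 down_f0] le_f_f0.
case: (classic (g0 = g_bot K)) => [|/(exists_ne_of_ne_const (c := cbot L2)) [b g0b_nbot]].
  by right.
left; case Xb: (X b); last first.
  case: (classic (ctop L1 = cbot L1)) => [top_bot | top_nbot].
    by apply: functional_extensionality => a; apply: clattice_trivial.
  have le_top_f0 : ple (ctop L1) (f0 aY) by have := le_f_f0 aY; rewrite /chiA YaY.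
  have RaYb_bot : cR aY b = pbot P.
    apply: (cR_pbot_of_upN (g := chiB X)); first by rewrite upNg /chiA YaY.
    by rewrite /chiB Xb.
  case: top_nbot; apply: le_cbot_eq.
  by rewrite -(up_eq_cbot RaYb_bot g0b_nbot) up_g0.
have top_nbot : ctop L2 <> cbot L2.
  by move=> top_bot; apply: g0b_nbot; apply: clattice_trivial.
apply: functional_extensionality => a; rewrite /chiA; case Ya: (Y a).
  by apply: ctop_le_eq; have := le_f_f0 a; rewrite /chiA Ya.
rewrite -up_g0 (up_eq_cbot (b := b)) //.
apply: (cR_pbot_of_downN (f := chiA Y)); first by rewrite downNf /chiB Xb.
by rewrite /chiA Ya.
Qed.

End Context.

Theorem mainTheorem14 (L1 L2 : clattice) (P : bposet)
  (F : ma_frame L1 L2 P) (Fp : po_frame L1 L2 P) (Fo : oo_frame L1 L2 P)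
  (K : context F Fp Fo) (g : cB K -> L2) (f : cA K -> L1) :
  normalized K ->
  in_FC g f ->
  (up g <> f_bot K ->
     ~ exists (g0 : cB K -> L2) (f0 : cA K -> L1),
         in_M g0 f0 /\
         concept_lt (g, up g) (g0, f0) /\
         concept_lt (g0, f0) (g_top K, f_bot K)) /\
  (down f <> g_bot K ->
     ~ exists (g0 : cB K -> L2) (f0 : cA K -> L1),
         in_M g0 f0 /\
         concept_lt (g_bot K, f_top K) (g0, f0) /\
         concept_lt (g0, f0) (down f, f)).
Proof.
move=> _ gf_FC; split=> _ [g0 [f0 [[up_g0 down_f0] [[le_low ne_low] [le_high ne_high]]]]].
- case: (in_FC_concept_above gf_FC (conj up_g0 down_f0) le_low) => [g0_g | f0_bot].
    by apply: ne_low; rewrite -up_g0 g0_g.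
  by apply: ne_high; rewrite -down_f0 f0_bot down_f_bot.
- have le_f_f0 : forall a, ple (f a) (f0 a) by rewrite -up_g0; exact: le_up_of_le_down.
  case: (in_FC_concept_below gf_FC (conj up_g0 down_f0) le_f_f0) => [f0_f | g0_bot].
    by apply: ne_high; rewrite -down_f0 f0_f.
  by apply: ne_low; rewrite -up_g0 g0_bot up_g_bot.
Qed.
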